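(* Let $p > 3$ be a prime and let $n \in \mathbb{N}$ with $n \ge 2^{18} \log p$. Set $m := \lfloor 2^{12} \log p \rfloor$. Let $v \in \mathbb{Z}_p^n$. There exists $U \subset [n]$ with $|U| \le m$ such that $$|T_{8\ell}(v)| \le 2\, |F(v_U)| \qquad \text{and} \qquad F(v_U) \subset T_t(v),$$ where $\ell := 2^{-16} |v|$ and $t := 2^{-7} n$.
   Context: $\log$ is the natural logarithm. For $w \in \mathbb{Z}_p^r$, $|w|$ is the number of nonzero coordinates, and for $s \ge 0$ $$T_s(w) := \Big\{ k \in \mathbb{Z}_p : \sum_{i=1}^r \Big\| \frac{k \cdot w_i}{p} \Big\|^2 \le s \Big\}, \qquad F(w) := T_{\log p}(w),$$ where $k \cdot w_i \in \mathbb{Z}$ is the product of the representatives of $k$ and $w_i$ in $\{0,\ldots,p-1\}$, and $\|x\|$ is the distance from $x$ to the nearest integer. For $U \subset [n]$, $v_U \in \mathbb{Z}_p^{|U|}$ is the restriction of $v$ to the coordinates in $U$. *)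

From HB Require Import structures.
From mathcomp Require Import all_boot all_order all_algebra.
From mathcomp Require Import reals exp.
Set Implicit Arguments. Unset Strict Implicit. Unset Printing Implicit Defensive.
Import Order.TTheory GRing.Theory Num.Theory.
Local Open Scope ring_scope.

(* Z_p is represented by 'I_p = {0,...,p-1}, i.e. by the canonical
   representatives; a vector of Z_p^I (I a finite index type) is a
   function I -> 'I_p. *)

Definition dnint (R : realType) (x : R) : R :=
  Num.min (x - (Num.floor x)%:~R) ((Num.ceil x)%:~R - x).

Definition wt (p : nat) (I : finType) (w : I -> 'I_p) : nat :=
  #|[set i | val (w i) != 0%N]|.

Definition Tset (R : realType) (p : nat) (I : finType) (w : I -> 'I_p) (s : R)
  : {set 'I_p} :=
  [set k : 'I_p | \sum_(i : I) (dnint ((val k * val (w i))%:R / p%:R)) ^+ 2 <= s].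

Definition Fset (R : realType) (p : nat) (I : finType) (w : I -> 'I_p)
  : {set 'I_p} := Tset w (ln (p%:R : R)).

Definition restr (p n : nat) (v : 'I_n -> 'I_p) (U : {set 'I_n})
  : {i : 'I_n | i \in U} -> 'I_p := fun i => v (val i).
Arguments restr {p n} v U _.

(* Take m ~ 2^11 log p blocks of b = n / m coordinates and let U pick one
   coordinate in each block, the choice c ranging over all b^m choice functions.
   Write S(k) and S_U(k) for the sums defining T(v) and T(v_U); averaged over c,
   S_U(k) is about S(k) / b.
   - If k is in T_{8l}(v), then S(k) <= n / 2^13 <= 3/10 b log p, so by Markov's
     inequality S_U(k) > log p for at most 3/10 of the choices.
   - If S(k) > n / 2^7, then, as all terms lie in [0, 1/4] where
     e^{-4y} <= 1 - 2y <= e^{-2y}, the average of e^{-4 S_U(k)} is at most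
     e^{-2 S(k) / b} <= p^{-15}; so S_U(k) <= log p for at most a fraction p^{-11}
     of the choices, and at most 1/11 after summing over the p values of k.
   A weighted average of the two counts yields a choice doing well on both:
   F(v_U) then contains no k with S(k) > n / 2^7 and at least half of T_{8l}(v). *)

From HB Require Import structures.
From mathcomp Require Import all_boot all_order all_algebra.
From mathcomp Require Import reals sequences exp ring lra zify.
Import Order.TTheory GRing.Theory Num.Theory.
Set Implicit Arguments. Unset Strict Implicit. Unset Printing Implicit Defensive.
Local Open Scope ring_scope.

Lemma sum_ffun_coord (R : comPzSemiRingType) (I J : finType) (g : J -> R) (i : I) :
  #|J|%:R * \sum_(c : {ffun I -> J}) g (c i) = #|J|%:R ^+ #|I| * \sum_j g j.
Proof.
have -> : \sum_(c : {ffun I -> J}) g (c i) =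
          \sum_(c : {ffun I -> J}) \prod_i' (if i' == i then g (c i') else 1).
  apply: eq_bigr => c _; rewrite (bigD1 i) //= eqxx big1 ?mulr1 // => i'.
  by move/negbTE->.
have -> : #|J|%:R ^+ #|I| = \prod_(i' : I) (#|J|%:R : R) by rewrite prodr_const.
rewrite -(bigA_distr_bigA (fun i' j => if i' == i then g j else 1)).
rewrite (bigD1 i) //= [in RHS](bigD1 i) //= eqxx [LHS]mulrCA [RHS]mulrC.
congr (_ * (_ * _)).
by apply: eq_bigr => i' /negbTE->; rewrite sumr_const.
Qed.

Lemma exists_lt_of_sum_lt (R : realDomainType) (A : finType) (F : A -> R) x :
  \sum_a F a < #|A|%:R * x -> exists a, F a < x.
Proof.
case: (pickP [pred a | F a < x]) => [a ltFx _|ge_x]; first by exists a.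
rewrite mulr_natl -sumr_const ltNge => /negP[]; apply: ler_sum => a _.
by rewrite leNgt; apply/negbT/ge_x.
Qed.

Lemma sum_indicator (R : pzSemiRingType) (A : finType) (D : {pred A}) (P : pred A) :
  \sum_(a in D) (P a)%:R = #|[set a in D | P a]|%:R :> R.
Proof.
rewrite -sum1_card natr_sum [LHS]big_mkcond [RHS]big_mkcond /=.
by apply: eq_bigr => a _; rewrite inE; case: (a \in D); case: (P a).
Qed.

Section InjectiveSums.
Variables (R : realDomainType) (A B : finType) (e : A -> B) (F : B -> R).
Hypothesis e_inj : injective e.

Lemma sum_inj_le : (forall y, 0 <= F y) -> \sum_x F (e x) <= \sum_y F y.
Proof.
move=> F_ge0; rewrite -(big_imset _ (in2W e_inj)) /=.
by rewrite [X in _ <= X](bigID (mem (e @: A))) /= lerDl sumr_ge0.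
Qed.

Lemma sum_inj_ge (c : R) : (forall y, F y <= c) ->
  \sum_y F y <= \sum_x F (e x) + (#|B| - #|A|)%:R * c.
Proof.
move=> F_le; rewrite -(big_imset _ (in2W e_inj)) /= (bigID (mem (e @: A))) /= lerD2l.
apply: le_trans (ler_sum _ (fun y _ => F_le y)) _.
have card_out : #|[pred y | y \notin e @: A]| = (#|B| - #|A|)%N.
  by rewrite -(cardC (mem (e @: A))) card_imset // addKn.
by rewrite sumr_const card_out mulr_natl lexx.
Qed.
End InjectiveSums.

Lemma expR_N4x_le_1B2x (R : realType) (x : R) :
  0 <= x <= 1/4 -> expR (- (4 * x)) <= 1 - 2 * x.
Proof.
move=> /andP[x_ge0 x_le]; rewrite expRN -[X in X <= _]mul1r ler_pdivrMr ?expR_gt0 //.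
apply: (@le_trans _ _ ((1 - 2 * x) * (1 + 4 * x))); first nra.
by rewrite ler_wpM2l ?expR_ge1Dx //; lra.
Qed.

Section RandomChoice.
Variables (R : realType) (I J K : finType) (f : I -> J -> K -> R).
Hypothesis f_range : forall i j k, 0 <= f i j k <= 1/4.
Hypothesis J_gt0 : (0 < #|J|)%N.

Definition choice_sum (c : {ffun I -> J}) (k : K) : R := \sum_i f i (c i) k.
Definition block_sum (k : K) : R := \sum_i \sum_j f i j k.

Local Notation b := (#|J|%:R : R).
Local Notation N := (#|J|%:R ^+ #|I| : R).

Let b_gt0 : 0 < b. Proof. by rewrite ltr0n. Qed.
Let N_gt0 : 0 < N. Proof. by rewrite exprn_gt0. Qed.

Lemma choice_sum_ge0 c k : 0 <= choice_sum c k.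
Proof. by apply: sumr_ge0 => i _; case/andP: (f_range i (c i) k). Qed.

Lemma sum_choice_sum k : b * \sum_c choice_sum c k = N * block_sum k.
Proof.
rewrite /choice_sum exchange_big /= /block_sum !mulr_sumr.
by apply: eq_bigr => i _; exact: sum_ffun_coord.
Qed.

Lemma markov_choice_sum (L : R) k : 0 < L ->
  b * L * \sum_c (L < choice_sum c k)%R%:R <= N * block_sum k.
Proof.
move=> L_gt0; rewrite -sum_choice_sum -mulrA ler_pM2l // mulr_sumr.
apply: ler_sum => c _; case: ltrP => [/ltW|_]; first by rewrite mulr1.
by rewrite mulr0 choice_sum_ge0.
Qed.

Lemma sum_expR_le (x : J -> R) : (forall j, 0 <= x j <= 1/4) ->
  \sum_j expR (- (4 * x j)) <= b * expR (- (2 * (\sum_j x j) / b)).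
Proof.
move=> x_range; apply: (@le_trans _ _ (\sum_j (1 - 2 * x j))).
  by apply: ler_sum => j _; apply: expR_N4x_le_1B2x.
have -> : \sum_j (1 - 2 * x j) = b - 2 * \sum_j x j.
  by rewrite sumrB sumr_const mulr_sumr.
have -> : b - 2 * \sum_j x j = b * (1 + - (2 * (\sum_j x j) / b)).
  by field; rewrite gt_eqF.
rewrite ler_pM2l //; exact: expR_ge1Dx.
Qed.

Lemma sum_expR_choice_sum k :
  \sum_c expR (- (4 * choice_sum c k)) <= N * expR (- (2 * block_sum k / b)).
Proof.
have -> : \sum_c expR (- (4 * choice_sum c k)) = \prod_i \sum_j expR (- (4 * f i j k)).
  rewrite bigA_distr_bigA; apply: eq_bigr => c _.
  by rewrite /choice_sum mulr_sumr -sumrN expR_sum.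
apply: (@le_trans _ _ (\prod_(i : I) (b * expR (- (2 * (\sum_j f i j k) / b))))).
  apply: ler_prod => i _; rewrite sumr_ge0 ?sum_expR_le // => j _.
  exact: expR_ge0.
by rewrite big_split /= prodr_const -expR_sum sumrN /block_sum mulr_sumr mulr_suml.
Qed.

Lemma count_small_choice_sum (L : R) k :
  \sum_c (choice_sum c k <= L)%R%:R <= N * expR (4 * L - 2 * block_sum k / b).
Proof.
apply: (@le_trans _ _ (expR (4 * L) * \sum_c expR (- (4 * choice_sum c k)))).
  rewrite mulr_sumr; apply: ler_sum => c _; rewrite -expRD.
  case: (lerP (choice_sum c k) L) => [le_L|_] /=; last exact: expR_ge0.
  apply: le_trans (expR_ge1Dx _); lra.
rewrite expRD mulrCA ler_pM2l ?expR_gt0 //; exact: sum_expR_choice_sum.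
Qed.

Lemma sum_large_count_le (L : R) (T : {set K}) : 0 < L ->
  (forall k, k \in T -> block_sum k <= 3/10 * b * L) ->
  \sum_c \sum_(k in T) (L < choice_sum c k)%R%:R <= 3/10 * N * #|T|%:R.
Proof.
move=> L_gt0 T_small; rewrite exchange_big /= mulr_natr -sumr_const.
apply: ler_sum => k kT; rewrite -(@ler_pM2l _ (b * L)) ?mulr_gt0 //.
apply: le_trans (markov_choice_sum k L_gt0) _.
have -> : b * L * (3/10 * N) = N * (3/10 * b * L) by ring.
by rewrite ler_pM2l //; apply: T_small.
Qed.

Lemma sum_bad_small_count_le (L : R) (G : pred K) :
  (forall k, ~~ G k -> 15/2 * b * L <= block_sum k) ->
  #|K|%:R * expR (- (11 * L)) <= 1/11 ->
  \sum_c \sum_(k | ~~ G k) (choice_sum c k <= L)%R%:R <= N / 11.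
Proof.
move=> notG_large K_small; rewrite exchange_big /=.
apply: (@le_trans _ _ (\sum_(k | ~~ G k) N * expR (- (11 * L)))).
  apply: ler_sum => k nGk; apply: le_trans (count_small_choice_sum L k) _.
  rewrite ler_pM2l // ler_expR.
  have : 15 * L <= 2 * block_sum k / b.
    by rewrite ler_pdivlMr //; have := notG_large k nGk; lra.
  lra.
apply: (@le_trans _ _ (\sum_k N * expR (- (11 * L)))).
  rewrite [X in _ <= X](bigID (fun k => ~~ G k)) /= lerDl.
  by apply: sumr_ge0 => k _; rewrite mulr_ge0 ?expR_ge0 ?ltW.
rewrite -mulr_sumr; apply: le_trans (_ : N * (1/11) <= _); last by rewrite mul1r.
rewrite ler_pM2l //; apply: le_trans K_small.
by rewrite sumr_const [X in _ <= X]mulr_natl; apply: lexx.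
Qed.

Lemma exists_good_choice (L : R) (T : {set K}) (G : pred K) :
  0 < L ->
  (forall k, k \in T -> block_sum k <= 3/10 * b * L) ->
  (forall k, ~~ G k -> 15/2 * b * L <= block_sum k) ->
  #|K|%:R * expR (- (11 * L)) <= 1/11 ->
  exists c, (#|T| <= 2 * #|[set k | (choice_sum c k <= L)%R]|)%N /\
            (forall k, choice_sum c k <= L -> G k).
Proof.
move=> L_gt0 T_small notG_large K_small.
pose large c : R := \sum_(k in T) (L < choice_sum c k)%R%:R.
pose bad_small c : R := \sum_(k | ~~ G k) (choice_sum c k <= L)%R%:R.
have large_ge0 c : 0 <= large c by apply: sumr_ge0.
have bad_small_ge0 c : 0 <= bad_small c by apply: sumr_ge0.
(* With weight [t], a single bad [k] costs more than the budget [t / 2]. *)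
pose t : R := #|T|%:R + 1.
have t_ge0 : 0 <= t by rewrite /t addr_ge0.
have : \sum_c (large c + t * bad_small c) < #|{ffun I -> J}|%:R * (t / 2).
  rewrite card_ffun natrX big_split /= -mulr_sumr.
  have NT_ge0 : 0 <= N * #|T|%:R by apply: mulr_ge0; [exact: ltW | exact: ler0n].
  have := ler_wpM2l t_ge0 (sum_bad_small_count_le notG_large K_small).
  move: (sum_large_count_le L_gt0 T_small) NT_ge0 N_gt0; rewrite /t; lra.
case/exists_lt_of_sum_lt => c bad_c.
have good_c k : choice_sum c k <= L -> G k.
  move=> le_L; apply/negPn/negP => nGk.
  have : 1 <= bad_small c.
    by rewrite /bad_small (bigD1 k) //= le_L lerDl sumr_ge0.
  move: bad_c (large_ge0 c) t_ge0; nra.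
exists c; split=> //.
set D := [set k in T | L < choice_sum c k].
set B := [set k | choice_sum c k <= L].
have D_small : (2 * #|D| < #|T|.+1)%N.
  rewrite -(ltr_nat R) natrM -addn1 natrD.
  have := mulr_ge0 t_ge0 (bad_small_ge0 c).
  by move: bad_c; rewrite /large sum_indicator -/D /t; lra.
have : T \subset D :|: B.
  by apply/subsetP => k kT; rewrite !inE kT /=; case: (ltrP L (choice_sum c k)).
move/subset_leq_card; rewrite cardsU; lia.
Qed.

End RandomChoice.

Lemma exists_small_support (R : realType) (K : finType) (n m b : nat)
    (g : 'I_n -> K -> R) (L : R) (T : {set K}) (G : pred K) :
  (m * b <= n)%N -> (0 < b)%N -> (forall i k, 0 <= g i k <= 1/4) -> 0 < L ->
  (forall k, k \in T -> \sum_i g i k <= 3/10 * b%:R * L) ->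
  (forall k, ~~ G k -> 15/2 * b%:R * L + (n - m * b)%:R / 4 <= \sum_i g i k) ->
  #|K|%:R * expR (- (11 * L)) <= 1/11 ->
  exists U : {set 'I_n}, [/\ (#|U| <= m)%N,
    (#|T| <= 2 * #|[set k | (\sum_(i in U) g i k <= L)%R]|)%N &
    forall k, \sum_(i in U) g i k <= L -> G k].
Proof.
move=> mb_le b_gt0 g_range L_gt0 T_small notG_large K_small.
(* Blocks are fibres of an injection ['I_m * 'I_b -> 'I_n]; each of the
   [n - m * b] coordinates left out contributes at most [1/4]. *)
have card_pairs : (#|{: 'I_m * 'I_b}| <= n)%N by rewrite card_prod !card_ord.
pose e (u : 'I_m * 'I_b) : 'I_n := widen_ord card_pairs (enum_rank u).
have e_inj : injective e.
  by move=> u u' /(congr1 val) /= /val_inj; apply: enum_rank_inj.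
pose f (i : 'I_m) (j : 'I_b) := g (e (i, j)).
have block_sumE k : block_sum f k = \sum_u g (e u) k.
  by rewrite /block_sum pair_big; apply: eq_bigr => -[].
have J_gt0 : (0 < #|'I_b|)%N by rewrite card_ord.
have T_small' k : k \in T -> block_sum f k <= 3/10 * #|'I_b|%:R * L.
  move=> kT; rewrite block_sumE card_ord; apply: le_trans (T_small k kT).
  by apply: sum_inj_le => // i; case/andP: (g_range i k).
have notG_large' k : ~~ G k -> 15/2 * #|'I_b|%:R * L <= block_sum f k.
  move=> nGk; have := notG_large k nGk.
  have := sum_inj_ge (F := fun i => g i k) e_inj (fun i => proj2 (andP (g_range i k))).
  by rewrite /= block_sumE card_prod !card_ord; lra.
have [c [c_large c_good]] := exists_good_choice (fun _ _ _ => g_range _ _) J_gt0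
  L_gt0 T_small' notG_large' K_small.
pose U := [set e (i, c i) | i : 'I_m].
have sumU k : \sum_(i in U) g i k = choice_sum f c k.
  by rewrite big_imset // => i i' _ _ /e_inj [].
exists U; split.
- by rewrite (leq_trans (leq_imset_card _ _)) ?card_ord.
- by under eq_finset => k do rewrite sumU.
- by move=> k; rewrite sumU; exact: c_good.
Qed.

Section RealFacts.
Variable R : realType.

Lemma dnint_itv (x : R) : 0 <= dnint x <= 1/2.
Proof.
have floor_x := floor_le x; have ceil_x := ceil_ge x.
have ceil_le : (Num.ceil x)%:~R <= (Num.floor x)%:~R + 1 :> R.
  have : Num.ceil x <= Num.floor x + 1 by rewrite ceil_le_int ltW // floorD1_gt.
  by rewrite -(ler_int R) intrD.
rewrite /dnint le_min ge_min; apply/andP; split; first by apply/andP; split; lra.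
by case: (lerP (x - (Num.floor x)%:~R) (1/2)) => //= ?; lra.
Qed.

Lemma sqr_dnint_itv (x : R) : 0 <= dnint x ^+ 2 <= 1/4.
Proof.
have /andP[d_ge0 d_le] := dnint_itv x.
by rewrite sqr_ge0 /= expr2; nra.
Qed.

Lemma expR1_le4 : expR 1 <= 4 :> R.
Proof.
have half_le : expR (1/2) <= 2 :> R.
  have := expR_ge1Dx (- (1/2) : R); have := expRxMexpNx_1 (1/2 : R).
  have := expR_gt0 (1/2 : R); nra.
have -> : (1 : R) = 1/2 + 1/2 by lra.
by rewrite expRD; have := expR_gt0 (1/2 : R); nra.
Qed.

Lemma ln_ge1 (x : R) : 4 <= x -> 1 <= ln x.
Proof.
move=> x_ge4; rewrite -[1 in X in X <= _]expRK ler_ln ?posrE ?expR_gt0 //; last by lra.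
exact: le_trans expR1_le4 x_ge4.
Qed.

Lemma expR_ln_mulN11_le (x : R) : 4 <= x -> x * expR (- (11 * ln x)) <= 1/11.
Proof.
move=> x_ge4; have L_ge1 := ln_ge1 x_ge4.
rewrite -[x in x * _]lnK ?posrE; last by lra.
rewrite -expRD (_ : ln x + - (11 * ln x) = - (10 * ln x)); last by lra.
have := expR_ge1Dx (10 * ln x); have := expRxMexpNx_1 (10 * ln x).
have := expR_gt0 (- (10 * ln x)); nra.
Qed.

Lemma block_size_bounds (L m b n : R) :
  1 <= L -> 2048 * 128 * L <= n -> m <= 2048 * L < m + 1 ->
  m * b <= n < (b + 1) * m ->
  n / 8192 <= 3/10 * b * L /\ 15/2 * b * L + (n - m * b) / 4 <= n / 128.
Proof.
move=> L_ge1 n_ge /andP[m_le m_gt] /andP[mb_le n_lt].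
have m_gt0 : 0 < m by lra.
have b_gt127 : 127 < b.
  have : 128 * m < (b + 1) * m by lra.
  by rewrite ltr_pM2r //; lra.
have m_ge : 2047 * L <= m by lra.
split.
  have : (b + 1) * m <= (b + 1) * (2048 * L) by rewrite ler_wpM2l //; lra.
  have : 5 * L <= b * L by rewrite ler_wpM2r //; lra.
  lra.
have : b * (2047 * L) <= b * m by rewrite ler_wpM2l //; lra.
lra.
Qed.

Lemma exists_block_size (L : R) (n : nat) : 1 <= L -> 2048 * 128 * L <= n%:R ->
  exists m b : nat, [/\ (m * b <= n)%N, (0 < b)%N, m%:R <= 2048 * L,
    n%:R / 8192 <= 3/10 * b%:R * L &
    15/2 * b%:R * L + (n - m * b)%:R / 4 <= n%:R / 128].
Proof.
move=> L_ge1 n_ge; have x_ge1 : 1 <= 2048 * L by lra.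
have /andP[m_le m_gt] := truncn_itv (le_trans ler01 x_ge1).
set m := Num.truncn _ in m_le m_gt; rewrite -[m.+1%:R]natr1 in m_gt.
have m_gt0 : (0 < m)%N by rewrite truncn_gt0.
have mb_le : (m * (n %/ m) <= n)%N by rewrite mulnC leq_divM.
have mb_bounds : m%:R * (n %/ m)%:R <= (n%:R : R) < ((n %/ m)%:R + 1) * m%:R.
  by rewrite -natrM natr1 -natrM ler_nat ltr_nat mulnC leq_divM ltn_ceil.
have [T_small notG_large] :=
  block_size_bounds L_ge1 n_ge (introT andP (conj m_le m_gt)) mb_bounds.
exists m, (n %/ m)%N; split; rewrite ?natrB ?natrM //.
by rewrite divn_gt0 // -(ler_nat R); lra.
Qed.

End RealFacts.

Lemma wt_le_card (p : nat) (I : finType) (w : I -> 'I_p) : (wt w <= #|I|)%N.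
Proof. exact: max_card. Qed.

Theorem lemma3p6 (R : realType) (p n : nat) (hp : prime p) (hp3 : (3 < p)%N)
  (hn : (2%:R : R) ^+ 18 * ln (p%:R : R) <= n%:R)
  (v : 'I_n -> 'I_p) :
  exists U : {set 'I_n},
    (#|U|%:Z <= Num.floor ((2%:R : R) ^+ 12 * ln (p%:R : R))) /\
    (#|Tset v (8 * ((wt v)%:R / (2%:R : R) ^+ 16))|
       <= 2 * #|Fset R (restr v U)|)%N /\
    Fset R (restr v U) \subset Tset v ((n%:R : R) / (2%:R : R) ^+ 7).
Proof.
have p_ge4 : 4 <= p%:R :> R by rewrite (ler_nat R 4).
set L := ln (p%:R : R) in hn *; have L_ge1 : 1 <= L := ln_ge1 p_ge4.
have e7 : (2%:R : R) ^+ 7 = 128 by rewrite -natrX.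
have e12 : (2%:R : R) ^+ 12 = 4096 by rewrite -natrX.
have e16 : (2%:R : R) ^+ 16 = 2048 * 32 by rewrite (exprD _ 11 5) -!natrX.
have e18 : (2%:R : R) ^+ 18 = 2048 * 128 by rewrite (exprD _ 11 7) -!natrX.
rewrite e18 in hn; rewrite e7 e12 e16.
have [m [b [mb_le b_gt0 m_le T_small notG_large]]] := exists_block_size L_ge1 hn.
pose g (i : 'I_n) (k : 'I_p) : R := dnint ((val k * val (v i))%:R / p%:R) ^+ 2.
pose G := [pred k | \sum_i g i k <= n%:R / 128].
have T_block k : k \in Tset v (8 * ((wt v)%:R / (2048 * 32)) : R) ->
    \sum_i g i k <= 3/10 * b%:R * L.
  rewrite inE => /le_trans; apply; apply: le_trans T_small.
  by move: (wt_le_card v); rewrite card_ord -(ler_nat R); lra.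
have notG_block k :
    ~~ G k -> 15/2 * b%:R * L + (n - m * b)%:R / 4 <= \sum_i g i k.
  by rewrite /= -ltNge => /ltW; exact: le_trans notG_large.
have p_weight : #|'I_p|%:R * expR (- (11 * L)) <= 1/11.
  by rewrite card_ord; apply: expR_ln_mulN11_le.
have [U [U_card U_large U_good]] := exists_small_support mb_le b_gt0
  (fun i k => sqr_dnint_itv _) (lt_le_trans ltr01 L_ge1) T_block notG_block p_weight.
have FE : Fset R (restr v U) = [set k | \sum_(i in U) g i k <= L].
  by apply/setP => k; rewrite !inE (big_sub _ (fun i => g i k)).
exists U; split; [|split].
- rewrite floor_ge_int -[(_%:Z)%:~R]/(#|U|%:R).
  by move: U_card; rewrite -(ler_nat R); lra.
- by rewrite FE.
- by apply/subsetP => k; rewrite FE !inE => /U_good.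
Qed.
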